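(* The class of data languages accepted by deterministic SAFA (DSAFA) is closed under complementation (with respect to $(\Sigma\times D)^*$), but is not closed under union, intersection, concatenation, Kleene closure, reversal, homomorphism, or inverse homomorphism.
   Context: $D$ is a fixed countably infinite set of data values; for a finite alphabet $\Sigma$, data words are elements of $(\Sigma\times D)^*$. A set augmented finite automaton (SAFA) is a tuple $M=(Q,\Sigma\times D,q_0,F,H,\delta)$: $Q$ finite set of states, $q_0\in Q$ initial, $F\subseteq Q$ final, $H=\{h_1,\dots,h_m\}$ a finite collection of (names of) sets of data values, $\delta\subseteq Q\times\Sigma\times C\times OP\times Q$ with $C=\{p(h_i),\,!p(h_i): h_i\in H\}$, $OP=\{-\}\cup\{\mathsf{ins}(h_i):h_i\in H\}$. Configurations are $(q,\langle S_1,\dots,S_m\rangle)$ with $S_i\subseteq D$ finite; initially state $q_0$ and all sets empty. On reading $(a,d)$, a transition $(q,a,\alpha,op,q')$ from the current state may be taken if $\alpha=p(h_i)$ and $d\in S_i$, or $\alpha=\,!p(h_i)$ and $d\notin S_i$; then the state becomes $q'$ and if $op=\mathsf{ins}(h_j)$ the value $d$ is added to $S_j$ ($op=-$ changes nothing). A word is accepted if some run reads it entirely and ends in $F$. A SAFA is deterministic (a DSAFA) if for every $q\in Q$ and $a\in\Sigma$, all transitions from $q$ on letter $a$ test the same set $h_i$, and there is at most one such transition with condition $p(h_i)$ and at most one with condition $!p(h_i)$. Concatenation is $L_1L_2=\{uv:u\in L_1,v\in L_2\}$, Kleene closure is $L^*=\{u_1\cdots u_n:n\ge 0,u_i\in L\}$,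 reversal reverses the order of letters, and a homomorphism is a monoid homomorphism $(\Sigma\times D)^*\to(\Sigma\times D)^*$ determined by images of single letters; ''not closed'' means there exist DSAFA-recognizable languages (and, where relevant, a homomorphism) whose result is not recognized by any DSAFA. *)

From mathcomp Require Import all_boot.
Set Implicit Arguments. Unset Strict Implicit. Unset Printing Implicit Defensive.

Definition data := nat.

Definition dword (Sigma : finType) := seq (Sigma * data).
Definition dlang (Sigma : finType) := dword Sigma -> Prop.

(* A SAFA with state set [st], sets h_0 .. h_{m-1} indexed by 'I_m.
   A transition (q, a, (b, i), op, q') : the condition is p(h_i) if b = true,
   !p(h_i) if b = false; op = None is "-", op = Some j is ins(h_j). *)
Record SAFA (Sigma : finType) := {
  st : finType;
  nsets : nat;
  q0 : st;
  final : {set st};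
  delta : {set (st * Sigma * (bool * 'I_nsets) * option 'I_nsets * st)%type}
}.

Section Run.
Variables (Sigma : finType) (M : SAFA Sigma).

Definition sets_conf := 'I_(nsets M) -> seq data.

Definition apply_op (op : option 'I_(nsets M)) (d : data) (S : sets_conf)
  : sets_conf :=
  match op with
  | None => S
  | Some j => fun k => if k == j then d :: S k else S k
  end.

Fixpoint acc (q : st M) (S : sets_conf) (w : dword Sigma) : Prop :=
  match w with
  | [::] => q \in final M
  | (a, d) :: w' =>
      exists (b : bool) (i : 'I_(nsets M)) (op : option 'I_(nsets M)) (q' : st M),
        (q, a, (b, i), op, q') \in delta M /\
        (d \in S i) = b /\
        acc q' (apply_op op d S) w'
  end.

Definition accepts (w : dword Sigma) : Prop := acc (q0 M) (fun _ => [::]) w.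

Definition deterministic : Prop :=
  forall q a b1 i1 op1 q1 b2 i2 op2 q2,
    (q, a, (b1, i1), op1, q1) \in delta M ->
    (q, a, (b2, i2), op2, q2) \in delta M ->
    i1 = i2 /\ (b1 = b2 -> op1 = op2 /\ q1 = q2).
End Run.

Definition DSAFA_lang (Sigma : finType) (L : dlang Sigma) : Prop :=
  exists M : SAFA Sigma, deterministic M /\ forall w, L w <-> accepts M w.

Definition lcompl (Sigma : finType) (L : dlang Sigma) : dlang Sigma :=
  fun w => ~ L w.
Definition lunion (Sigma : finType) (L1 L2 : dlang Sigma) : dlang Sigma :=
  fun w => L1 w \/ L2 w.
Definition linter (Sigma : finType) (L1 L2 : dlang Sigma) : dlang Sigma :=
  fun w => L1 w /\ L2 w.
Definition lconcat (Sigma : finType) (L1 L2 : dlang Sigma) : dlang Sigma :=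
  fun w => exists u v, w = u ++ v /\ L1 u /\ L2 v.
Definition lstar (Sigma : finType) (L : dlang Sigma) : dlang Sigma :=
  fun w => exists ws : seq (dword Sigma), w = flatten ws /\ forall u, u \in ws -> L u.
Definition lrev (Sigma : finType) (L : dlang Sigma) : dlang Sigma :=
  fun w => L (rev w).

Definition hom_ext (Sigma : finType) (h : Sigma * data -> dword Sigma)
  (w : dword Sigma) : dword Sigma := flatten (map h w).
Definition limage (Sigma : finType) (h : Sigma * data -> dword Sigma)
  (L : dlang Sigma) : dlang Sigma :=
  fun w => exists u, L u /\ w = hom_ext h u.
Definition lpreimage (Sigma : finType) (h : Sigma * data -> dword Sigma)
  (L : dlang Sigma) : dlang Sigma :=
  fun w => L (hom_ext h w).

(* Complementation: complete the automaton with an accepting sink and one fresh set that is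
   never filled.  Each move that M lacks from a state on a letter is sent to the sink, testing
   the set M tests there (the fresh set if M has no move at all), and final states are swapped.
   Completion keeps the automaton deterministic, so every word has exactly one run and the
   new automaton rejects exactly what M accepts.

   Non-closure: on each letter a DSAFA tests the data value against a single set, so of three
   values two look alike; exchanging them in a word whose continuation avoids both cannot
   change acceptance.  The language rep3U of words of length 3 whose first value recurs, or
   of length 4 where this holds after the first letter, violates this after the prefix 0 1
   with the values 0, 1 and 2.  Union, concatenation, reversal and inverse homomorphism
   produce rep3U from DSAFA languages, intersection produces its complement, and star and
   homomorphic image produce languages that agree with it on the words involved. *)

From mathcomp Require Import all_boot.
From Stdlib Require Import Classical.
Set Implicit Arguments. Unset Strict Implicit. Unset Printing Implicit Defensive.

Lemma bool_two_of_three (b1 b2 b3 : bool) : [\/ b1 = b2, b1 = b3 | b2 = b3].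
Proof. by case: b1; case: b2; case: b3; first [exact: Or31 | exact: Or32 | exact: Or33]. Qed.

Section Acceptance.
Variables (Sigma : finType) (M : SAFA Sigma).

Lemma eq_acc (q : st M) (S S' : sets_conf M) (w : dword Sigma) :
  (forall d k, d \in map snd w -> (d \in S k) = (d \in S' k)) ->
  acc q S w <-> acc q S' w.
Proof.
elim: w q S S' => [|[a d] w IH] q S S' eqS //=.
have eqS_op op : forall e k, e \in map snd w ->
    (e \in apply_op op d S k) = (e \in apply_op op d S' k).
  move=> e k we; have eqSe k' : (e \in S k') = (e \in S' k').
    by apply: eqS; rewrite inE we orbT.
  by case: op => [j|] //=; case: (k == j); rewrite ?inE eqSe.
have eqSd : forall k, (d \in S k) = (d \in S' k) by move=> k; apply: eqS; rewrite inE eqxx.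
split=> -[b [i [op [q' [tr [db accw]]]]]]; exists b, i, op, q'.
  by rewrite -eqSd; split=> //; split=> //; apply/(IH _ _ _ (eqS_op op)).
by rewrite eqSd; split=> //; split=> //; apply/(IH _ _ _ (eqS_op op)).
Qed.

Lemma acc_swap (q : st M) (S : sets_conf M) a z1 z2 (r : dword Sigma) :
  (forall b i op q', (q, a, (b, i), op, q') \in delta M ->
     (z1 \in S i) = (z2 \in S i)) ->
  z1 \notin map snd r -> z2 \notin map snd r ->
  acc q S ((a, z1) :: r) <-> acc q S ((a, z2) :: r).
Proof.
move=> eqz z1r z2r.
have eqS_op op : forall e k, e \in map snd r ->
    (e \in apply_op op z1 S k) = (e \in apply_op op z2 S k).
  move=> e k er; have ez z : z \notin map snd r -> (e == z) = false.
    by apply: contraNF => /eqP <-.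
  by case: op => [j|] //=; case: (k == j); rewrite // !inE !ez.
split=> /= -[b [i [op [q' [tr [zb accr]]]]]]; exists b, i, op, q'.
  by rewrite -(eqz _ _ _ _ tr); split=> //; split=> //; apply/(eq_acc _ (eqS_op op)).
by rewrite (eqz _ _ _ _ tr); split=> //; split=> //; apply/(eq_acc _ (eqS_op op)).
Qed.

Hypothesis detM : deterministic M.

Lemma acc_step q S a d b i op q' w :
  (q, a, (b, i), op, q') \in delta M -> (d \in S i) = b ->
  acc q S ((a, d) :: w) <-> acc q' (apply_op op d S) w.
Proof.
move=> tr db /=; split=> [|accw]; last by exists b, i, op, q'.
move=> [b' [i' [op' [q'' [tr' [db' accw]]]]]].
have [ii' same] := detM tr tr'; subst i'.
by have [-> ->] := same (etrans (esym db) db').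
Qed.

Lemma acc_cat (p : dword Sigma) (q : st M) (S : sets_conf M) :
  (forall r, ~ acc q S (p ++ r)) \/
  exists q' (S' : sets_conf M), forall r, acc q S (p ++ r) <-> acc q' S' r.
Proof.
elim: p q S => [|[a d] p IH] q S; first by right; exists q, S.
have [[b [i [op [q' [tr db]]]]] | stuck] :=
  classic (exists b i op q', (q, a, (b, i), op, q') \in delta M /\ (d \in S i) = b).
  have step r : acc q S (((a, d) :: p) ++ r) <-> acc q' (apply_op op d S) (p ++ r).
    exact: acc_step tr db.
  case: (IH q' (apply_op op d S)) => [dead | [q'' [S'' run]]].
    by left=> r /step /dead.
  by right; exists q'', S'' => r; rewrite step.
left=> r /= [b [i [op [q' [tr [db _]]]]]]; apply: stuck.
by exists b, i, op, q'.
Qed.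

Lemma acc_two_of_three (q : st M) (S : sets_conf M) a z1 z2 z3 (r12 r13 r23 : dword Sigma) :
  z1 \notin map snd r12 -> z2 \notin map snd r12 ->
  z1 \notin map snd r13 -> z3 \notin map snd r13 ->
  z2 \notin map snd r23 -> z3 \notin map snd r23 ->
  [\/ acc q S ((a, z1) :: r12) <-> acc q S ((a, z2) :: r12),
      acc q S ((a, z1) :: r13) <-> acc q S ((a, z3) :: r13) |
      acc q S ((a, z2) :: r23) <-> acc q S ((a, z3) :: r23)].
Proof.
move=> z1r12 z2r12 z1r13 z3r13 z2r23 z3r23.
have [[b0 [i0 [op0 [q0' tr0]]]] | stuck] :=
  classic (exists b i op q', (q, a, (b, i), op, q') \in delta M); last first.
  by apply: Or31; split=> /= -[b [i [op [q' [tr _]]]]]; case: stuck; exists b, i, op, q'.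
have same_test x y : (x \in S i0) = (y \in S i0) ->
    forall b i op q', (q, a, (b, i), op, q') \in delta M -> (x \in S i) = (y \in S i).
  by move=> xy b i op q' tr; have [<- _] := detM tr0 tr.
have [e12|e13|e23] := bool_two_of_three (z1 \in S i0) (z2 \in S i0) (z3 \in S i0).
- by apply: Or31; apply: acc_swap => //; apply: same_test.
- by apply: Or32; apply: acc_swap => //; apply: same_test.
- by apply: Or33; apply: acc_swap => //; apply: same_test.
Qed.

End Acceptance.

Lemma DSAFA_lang_two_of_three (Sigma : finType) (L : dlang Sigma) :
  DSAFA_lang L ->
  forall (p : dword Sigma) (a : Sigma) (z1 z2 z3 : data) (r12 r13 r23 : dword Sigma),
  z1 \notin map snd r12 -> z2 \notin map snd r12 ->
  z1 \notin map snd r13 -> z3 \notin map snd r13 ->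
  z2 \notin map snd r23 -> z3 \notin map snd r23 ->
  [\/ L (p ++ (a, z1) :: r12) <-> L (p ++ (a, z2) :: r12),
      L (p ++ (a, z1) :: r13) <-> L (p ++ (a, z3) :: r13) |
      L (p ++ (a, z2) :: r23) <-> L (p ++ (a, z3) :: r23)].
Proof.
move=> [M [detM ML]] p a z1 z2 z3 r12 r13 r23 z1r12 z2r12 z1r13 z3r13 z2r23 z3r23.
have [dead | [q [S run]]] := acc_cat detM p (q0 M) (fun _ => [::]).
  by apply: Or31; rewrite !ML; split=> /dead.
have := acc_two_of_three detM q S a z1r12 z2r12 z1r13 z3r13 z2r23 z3r23.
by case=> eqv; [apply: Or31 | apply: Or32 | apply: Or33]; rewrite !ML /accepts !run.
Qed.

Section Complement.
Variables (Sigma : finType) (M : SAFA Sigma).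
Hypothesis detM : deterministic M.

Local Notation n := (nsets M).
Local Notation widen := (widen_ord (leqnSn n)).

Definition moves (q : st M) (a : Sigma) (b : bool) : bool :=
  [exists i, exists op, exists q', (q, a, (b, i), op, q') \in delta M].

(* [ord_max] is the fresh, never filled set. *)
Definition tested_set (q : st M) (a : Sigma) : 'I_n.+1 :=
  if [pick i | [exists b, exists op, exists q', (q, a, (b, i), op, q') \in delta M]]
    is Some i then widen i else ord_max.

Definition compl_delta :
    {set option (st M) * Sigma * (bool * 'I_n.+1) * option 'I_n.+1 * option (st M)} :=
  [set t | let: (q, a, (b, j), op, q') := t in
     if q is Some q then
       [exists i, exists op0, exists q0,
          [&& (q, a, (b, i), op0, q0) \in delta M, j == widen i,
              op == omap widen op0 & q' == Some q0]]
       || [&& ~~ moves q a b, j == tested_set q a, op == None & q' == None]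
     else [&& j == ord_max, op == None & q' == None]].

Definition compl_safa : SAFA Sigma :=
  {| st := option (st M); nsets := n.+1; q0 := Some (q0 M);
     final := [set q | if q is Some q then q \notin final M else true];
     delta := compl_delta |}.

Lemma tested_setP q a b i op q' :
  (q, a, (b, i), op, q') \in delta M -> tested_set q a = widen i.
Proof.
move=> tr; rewrite /tested_set; case: pickP => [i' /existsP[b' /existsP[op' /existsP[q'' tr']]] | none].
  by have [-> _] := detM tr' tr.
by move: (none i); rewrite (introT existsP _) //; exists b; apply/existsP; exists op; apply/existsP; exists q'.
Qed.

Lemma compl_lift q a b i op q' :
  (q, a, (b, i), op, q') \in delta M ->
  (Some q, a, (b, widen i), omap widen op, Some q') \in delta compl_safa.
Proof.
move=> tr; rewrite inE /=; apply/orP; left.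
by apply/existsP; exists i; apply/existsP; exists op; apply/existsP; exists q'; rewrite tr !eqxx.
Qed.

Lemma compl_stuck q a b :
  ~~ moves q a b -> (Some q, a, (b, tested_set q a), None, None) \in delta compl_safa.
Proof. by move=> nomove; rewrite inE /= nomove !eqxx orbT. Qed.

Lemma compl_safa_det : deterministic compl_safa.
Proof.
have nomoveP q a b i op q' : ~~ moves q a b -> (q, a, (b, i), op, q') \notin delta M.
  by apply: contra => tr; apply/existsP; exists i; apply/existsP; exists op; apply/existsP; exists q'.
move=> [q|] a b1 j1 op1 r1 b2 j2 op2 r2; rewrite !inE /=; last first.
  by move=> /and3P[/eqP -> /eqP -> /eqP ->] /and3P[/eqP -> /eqP -> /eqP ->].
case/orP=> [/existsP[i1 /existsP[o1 /existsP[q1 /and4P[tr1 /eqP -> /eqP -> /eqP ->]]]]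
          | /and4P[stuck1 /eqP -> /eqP -> /eqP ->]];
case/orP=> [/existsP[i2 /existsP[o2 /existsP[q2 /and4P[tr2 /eqP -> /eqP -> /eqP ->]]]]
          | /and4P[stuck2 /eqP -> /eqP -> /eqP ->]] //.
- have [<- same] := detM tr1 tr2; split=> // b12.
  by have [-> ->] := same b12.
- rewrite (tested_setP tr1); split=> // b12; subst b2.
  by move: (nomoveP _ _ _ i1 o1 q1 stuck2); rewrite tr1.
- rewrite (tested_setP tr2); split=> // b12; subst b2.
  by move: (nomoveP _ _ _ i2 o2 q2 stuck1); rewrite tr2.
Qed.

Lemma acc_compl_sink (S : sets_conf compl_safa) (w : dword Sigma) :
  acc (None : st compl_safa) S w.
Proof.
elim: w S => [|[a d] w IH] S /=; first by rewrite inE.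
exists (d \in S ord_max), ord_max, None, None; split; last by split.
by rewrite inE /= !eqxx.
Qed.

Lemma apply_op_widen op d (S : sets_conf M) (S' : sets_conf compl_safa) :
  (forall i, S' (widen i) = S i) ->
  forall i, @apply_op _ compl_safa (omap widen op) d S' (widen i) = apply_op op d S i.
Proof. by move=> SS' i; case: op => [j|] /=; rewrite SS'. Qed.

Lemma acc_compl (q : st M) (S : sets_conf M) (S' : sets_conf compl_safa) w :
  (forall i, S' (widen i) = S i) ->
  acc (Some q : st compl_safa) S' w <-> ~ acc q S w.
Proof.
elim: w q S S' => [|[a d] w IH] q S S' SS'.
  by rewrite /= inE; split=> /negP.
have [[b [i [op [q' [tr db]]]]] | stuck] :=
  classic (exists b i op q', (q, a, (b, i), op, q') \in delta M /\ (d \in S i) = b).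
  have db' : (d \in S' (widen i)) = b by rewrite SS'.
  rewrite (acc_step detM w tr db) (acc_step compl_safa_det w (compl_lift tr) db').
  exact/IH/apply_op_widen.
split=> [_ [b [i [op [q' [tr [db _]]]]]] | _]; first by apply: stuck; exists b, i, op, q'.
set b := d \in S' (tested_set q a).
have nomove : ~~ moves q a b.
  apply/existsP=> -[i /existsP[op /existsP[q' tr]]]; apply: stuck; exists b, i, op, q'.
  by split=> //; rewrite /b (tested_setP tr) SS'.
exists b, (tested_set q a), None, None; split; first exact: compl_stuck.
by split; last exact: acc_compl_sink.
Qed.

End Complement.

Lemma DSAFA_lang_compl (Sigma : finType) (L : dlang Sigma) :
  DSAFA_lang L -> DSAFA_lang (lcompl L).
Proof.
move=> [M [detM ML]]; exists (compl_safa M); split; first exact: compl_safa_det.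
move=> w; rewrite /lcompl ML /accepts /=.
by rewrite (acc_compl detM (q0 M) (S := fun _ => [::])).
Qed.

Lemma eq_DSAFA_lang (Sigma : finType) (L L' : dlang Sigma) :
  (forall w, L w <-> L' w) -> DSAFA_lang L -> DSAFA_lang L'.
Proof. by move=> LL' [M [detM ML]]; exists M; split=> // w; rewrite -LL'. Qed.

Section DetSAFA.
Variables (Sigma Q : finType) (n : nat) (s0 : Q) (fin : pred Q)
  (tst : Q -> Sigma -> 'I_n) (nxt : Q -> Sigma -> bool -> option (option 'I_n * Q)).

Definition det_safa : SAFA Sigma :=
  {| st := Q; nsets := n; q0 := s0; final := [set q | fin q];
     delta := [set t | let: (q, a, (b, i), op, q') := t in
                       (i == tst q a) && (nxt q a b == Some (op, q'))] |}.

Fixpoint det_run (q : Q) (S : sets_conf det_safa) (w : dword Sigma) : bool :=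
  if w is (a, d) :: w' then
    if nxt q a (d \in S (tst q a)) is Some (op, q') then
      det_run q' (@apply_op _ det_safa op d S) w'
    else false
  else fin q.

Lemma det_safa_det : deterministic det_safa.
Proof.
move=> q a b1 i1 op1 q1 b2 i2 op2 q2; rewrite !inE /=.
move=> /andP[/eqP -> /eqP nxt1] /andP[/eqP -> /eqP nxt2]; split=> // b12; subst b2.
by move: nxt1; rewrite nxt2 => -[-> ->].
Qed.

Lemma acc_det_safa (q : Q) (S : sets_conf det_safa) (w : dword Sigma) :
  acc (q : st det_safa) S w <-> det_run q S w.
Proof.
elim: w q S => [|[a d] w IH] q S /=; first by rewrite inE.
split=> [[b [i [op [q' [tr [db accw]]]]]] | ].
  move: tr; rewrite inE /= => /andP[/eqP ei /eqP nxtb]; subst i b.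
  by rewrite nxtb; apply/IH.
case nxtd: (nxt q a _) => [[op q']|] // run.
exists (d \in S (tst q a)), (tst q a), op, q'.
by rewrite inE /= nxtd !eqxx; split=> //; split=> //; apply/IH.
Qed.

Lemma det_run_DSAFA : DSAFA_lang (fun w => det_run s0 (fun _ => [::]) w).
Proof.
exists det_safa; split; first exact: det_safa_det.
by move=> w; rewrite /accepts acc_det_safa.
Qed.

End DetSAFA.
Arguments det_run {Sigma Q n} s0 fin tst nxt q S w.

(* A variant of [inord] that reduces by computation. *)
Definition ord_of (k m : nat) : 'I_k.+1 :=
  match m < k.+1 as b return (m < k.+1) = b -> 'I_k.+1 with
  | true => fun h => Ordinal h
  | false => fun _ => ord0
  end erefl.

(* Automata given by tables over [nat], with states [0..k] and sets [0..n];
   out-of-range indices are read as 0. *)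
Definition table_run (Sigma : finType) (k n : nat) (s0 : nat) (fin : pred nat)
    (tst : nat -> Sigma -> nat) (nxt : nat -> Sigma -> bool -> option (option nat * nat))
    (w : dword Sigma) : bool :=
  det_run (Q := 'I_k.+1) (n := n.+1) (ord_of k s0) (fun q => fin q)
    (fun q a => ord_of n (tst q a))
    (fun q a b => omap (fun t => (omap (ord_of n) t.1, ord_of k t.2)) (nxt q a b))
    (ord_of k s0) (fun _ => [::]) w.

Lemma table_DSAFA (Sigma : finType) k n s0 fin tst nxt (P : pred (dword Sigma)) :
  (forall w, table_run k n s0 fin tst nxt w = P w) -> DSAFA_lang (fun w => P w).
Proof.
move=> runP; apply: eq_DSAFA_lang (det_run_DSAFA _ _ _ _) => w.
by rewrite -runP; apply: iff_refl.
Qed.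

(* Decides [table_run ... w = P w] symbolically, by case analysis on the equalities
   between data values.  The word is unfolded one letter at a time: unfolding it at
   once makes the symbolic run exponentially large. *)
Ltac decide_eqs :=
  repeat first
  [ progress rewrite /= ?inE ?eqxx
  | match goal with
    | H : is_true (?x != ?x) |- _ => by rewrite eqxx in H
    | H : is_true (?x != ?y) |- context [?x == ?y] => rewrite (negbTE H)
    | H : is_true (?x != ?y) |- context [?y == ?x] => rewrite [y == x]eq_sym (negbTE H)
    | |- context [?x == ?y] => is_var x; is_var y; case: (eqVneq x y) => [?|?]; [subst x|]
    | |- context [if ?a then _ else _] => is_var a; case: a
    end ].

Ltac decide_word w n :=
  decide_eqs; try done;
  lazymatch n with
  | 0 => idtac
  | S ?m => case: w => [|[? ?] w]; decide_word w m
  end.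

Ltac decide_table w n := rewrite /table_run; decide_word w n.

Definition data_lang (Sigma : finType) (P : pred (seq data)) : dlang Sigma :=
  fun w => P (map snd w).

Definition rep3 (s : seq data) : bool :=
  if s is [:: x; y; z] then (y == x) || (z == x) else false.

Definition rep3U (s : seq data) : bool := rep3 s || rep3 (behead s).

Definition word_of (x : bool) (ds : seq data) : dword bool :=
  if ds is d :: ds' then (x, d) :: [seq (true, e) | e <- ds'] else [::].

(* Refutes [DSAFA_lang_two_of_three] for the values 0, 1, 2 after the prefix
   [(x, 0); (true, 1)]. *)
Definition separates (L : dlang bool) (x : bool) : Prop :=
  [/\ L (word_of x [:: 0; 1; 0]), ~ L (word_of x [:: 0; 1; 1]), ~ L (word_of x [:: 0; 1; 2]),
      L (word_of x [:: 0; 1; 1; 3]) & ~ L (word_of x [:: 0; 1; 2; 3])].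

Lemma separates_not_DSAFA (L : dlang bool) (x : bool) : separates L x -> ~ DSAFA_lang L.
Proof.
move=> [in0 out1 out2 in13 out23] /DSAFA_lang_two_of_three.
move=> /(_ (word_of x [:: 0; 1]) true 0 1 2 [::] [::] [:: (true, 3)] isT isT isT isT isT isT).
by case=> [[/(_ in0)] | [/(_ in0)] | [/(_ in13)]].
Qed.

Lemma rep3U_not_DSAFA : ~ DSAFA_lang (@data_lang bool rep3U).
Proof. exact: (@separates_not_DSAFA _ true). Qed.

(* On [x y z]: state 1 has stored [x]; states 2 and 3 record whether [y == x]. *)
Definition rep3_step (q : nat) (b : bool) : option (option nat * nat) :=
  match q with
  | 0 => Some (Some 0, 1)
  | 1 => Some (None, if b then 2 else 3)
  | 2 => Some (None, 4)
  | 3 => if b then Some (None, 4) else None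
  | _ => None
  end.

Lemma rep3_DSAFA : DSAFA_lang (@data_lang bool rep3).
Proof.
apply: (@table_DSAFA _ 4 0 0 (pred1 4) (fun _ _ => 0) (fun q _ b => rep3_step q b)) => w.
by decide_table w 5.
Qed.

Lemma rep3_behead_DSAFA : DSAFA_lang (@data_lang bool (fun s => rep3 (behead s))).
Proof.
apply: (@table_DSAFA _ 5 0 5 (pred1 4) (fun _ _ => 0)
  (fun q _ b => if q == 5 then Some (None, 0) else rep3_step q b)) => w.
by decide_table w 6.
Qed.

Lemma short_DSAFA : DSAFA_lang (@data_lang bool (fun s => size s <= 1)).
Proof.
apply: (@table_DSAFA _ 1 0 0 predT (fun _ _ => 0)
  (fun q _ _ => if q == 0 then Some (None, 1) else None)) => w.
by decide_table w 3.
Qed.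

(* On words of length 3 or 4 labelled [false] first and [true] afterwards, the star of
   this language is [rep3U]: the first letter is a block of its own or starts a block. *)
Definition flag_or_rep3 (w : dword bool) : bool :=
  if w is [:: (false, _)] then true else rep3 (map snd w).

Lemma flag_or_rep3_DSAFA : DSAFA_lang (fun w => flag_or_rep3 w).
Proof.
apply: (@table_DSAFA _ 6 0 5 (fun q => (q == 4) || (q == 6)) (fun _ _ => 0)
  (fun q a b => if q == 5 then Some (Some 0, if a then 1 else 6)
                else rep3_step (if q == 6 then 1 else q) b)) => w.
by decide_table w 5.
Qed.

(* The first letter says where the pattern starts; erasing letters yields [rep3U]. *)
Definition rep3_marked (w : dword bool) : bool :=
  if w is (x, _) :: _ then rep3 (if x then behead (map snd w) else map snd w) else false.

Lemma rep3_marked_DSAFA : DSAFA_lang (fun w => rep3_marked w).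
Proof.
apply: (@table_DSAFA _ 5 0 5 (pred1 4) (fun _ _ => 0)
  (fun q a b => if q == 5 then (if a then Some (None, 0) else Some (Some 0, 1))
                else rep3_step q b)) => w.
by decide_table w 6.
Qed.

Definition rep3U_rev (s : seq data) : bool :=
  match s with
  | [:: x; y; z] | [:: x; y; z; _] => (z == y) || (z == x)
  | _ => false
  end.

Lemma rep3U_revE (s : seq data) : rep3U_rev (rev s) = rep3U s.
Proof.
have long t : 4 < size t -> rep3U_rev t = false by case: t => [|? [|? [|? [|? [|? ?]]]]].
case: s => [|x1 [|x2 [|x3 [|x4 [|x5 s]]]]] //.
- by rewrite /rev /rep3U /= orbF ![x1 == _]eq_sym.
- by rewrite /rev /rep3U /= ![x2 == _]eq_sym.
- by rewrite long // size_rev.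
Qed.

Lemma rep3U_rev_DSAFA : DSAFA_lang (@data_lang bool rep3U_rev).
Proof.
apply: (@table_DSAFA _ 4 0 0 (fun q => (q == 3) || (q == 4)) (fun _ _ => 0)
  (fun q _ b => match q with
                | 0 | 1 => Some (Some 0, q.+1)
                | 2 => if b then Some (None, 3) else None
                | 3 => Some (None, 4)
                | _ => None
                end)) => w.
by decide_table w 6.
Qed.

(* On a doubled word [x1 x1 x2 x2 ...] this is [rep3U [:: x1; x2; ...]]: seeing each
   value twice, an automaton can test it against two different sets. *)
Definition rep3U_doubled (s : seq data) : bool :=
  match s with
  | [:: x1; _; x3; _; x5; _] => (x3 == x1) || (x5 == x1)
  | [:: _; _; x3; _; _; x6; x7; _] => (x6 == x3) || (x7 == x3)
  | _ => false
  end.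

Lemma rep3U_doubled_DSAFA : DSAFA_lang (@data_lang bool rep3U_doubled).
Proof.
(* Set 0 holds the first value, set 1 the third; states 3/4 and 7/8 record whether the
   first value has recurred, 9..12 also whether the sixth letter repeats the third. *)
apply: (@table_DSAFA _ 14 1 0 (fun q => q \in [:: 9; 10; 14])
  (fun q _ => if q \in [:: 7; 8; 10; 12] then 1 else 0)
  (fun q _ b => match q with
                | 0 => Some (Some 0, 1)
                | 1 => Some (None, 2)
                | 2 => Some (Some 1, if b then 3 else 4)
                | 3 => Some (None, 5)
                | 4 => Some (None, 6)
                | 5 => Some (None, 7)
                | 6 => Some (None, if b then 7 else 8)
                | 7 => Some (None, if b then 9 else 10)
                | 8 => Some (None, if b then 11 else 12)
                | 9 | 11 => Some (None, 13)
                | 10 | 12 => if b then Some (None, 13) else None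
                | 13 => Some (None, 14)
                | _ => None
                end)) => w.
by decide_table w 10.
Qed.

Lemma lconcat_short_rep3 (w : dword bool) :
  lconcat (data_lang (fun s => size s <= 1)) (data_lang rep3) w <-> data_lang rep3U w.
Proof.
rewrite /data_lang /rep3U; split.
  move=> [[|e [|e' u]] [v [-> [//= _ rep3v]]]]; first by rewrite rep3v.
  by rewrite /= rep3v orbT.
case/orP=> [rep3w | ]; first by exists [::], w.
by case: w => [|e w] //= rep3w; exists [:: e], w.
Qed.

Definition double (e : bool * data) : dword bool := [:: e; e].

Lemma rep3U_doubledE (w : dword bool) :
  rep3U_doubled (map snd (hom_ext double w)) = rep3U (map snd w).
Proof.
rewrite /hom_ext /rep3U.
by case: w => [|[? x1] [|[? x2] [|[? x3] [|[? x4] [|[? x5] w]]]]] /=; rewrite ?orbF.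
Qed.

Section StarDecision.
Variables (Sigma : finType) (L : pred (dword Sigma)).

(* [f] is fuel: a nonempty block is split off at each step, so [size w] suffices. *)
Fixpoint starb (f : nat) (w : dword Sigma) : bool :=
  if f is f'.+1 then
    (w == [::]) || has (fun i => L (take i w) && starb f' (drop i w)) (iota 1 (size w))
  else w == [::].

Lemma starb_sound f w : starb f w -> lstar (fun u => L u) w.
Proof.
elim: f w => [|f IH] w /=; first by move/eqP->; exists [::].
case/orP=> [/eqP-> | /hasP[i _ /andP[Lu /IH[ws [wsE Lws]]]]]; first by exists [::].
exists (take i w :: ws); split; first by rewrite /= -wsE cat_take_drop.
by move=> u; rewrite inE => /orP[/eqP-> // | /Lws].
Qed.

Lemma starb_complete ws f :
  (forall u, u \in ws -> L u) -> size (flatten ws) <= f -> starb f (flatten ws).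
Proof.
elim: ws f => [|[|e u] ws IH] f Lws; first by case: f.
  by apply: IH => v wsv; apply: Lws; rewrite inE wsv orbT.
case: f => [|f] // sz; apply/orP; right; apply/hasP; exists (size u).+1.
  by rewrite mem_iota size_cat /= !ltnS leq_addr.
rewrite -[flatten _]/((e :: u) ++ flatten ws) take_size_cat // drop_size_cat //.
rewrite Lws ?mem_head //=.
apply: IH => [v wsv | ]; first by apply: Lws; rewrite inE wsv orbT.
by move: sz; rewrite /= size_cat ltnS; apply: leq_trans; rewrite leq_addl.
Qed.

Lemma lstarP w : lstar (fun u => L u) w <-> starb (size w) w.
Proof.
split=> [[ws [-> Lws]] | ]; last exact: starb_sound.
by apply: starb_complete.
Qed.

End StarDecision.

Definition relabel (e : bool * data) : dword bool := [:: (true, e.2)].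

Lemma all_fst_relabel (u : dword bool) : all fst (hom_ext relabel u).
Proof. by elim: u. Qed.

Lemma map_snd_relabel (u : dword bool) : map snd (hom_ext relabel u) = map snd u.
Proof. by rewrite /hom_ext; elim: u => //= e u ->. Qed.

Lemma relabel_id (w : dword bool) : all fst w -> hom_ext relabel w = w.
Proof. by rewrite /hom_ext; elim: w => [|[[] d] w IH] //= /IH ->. Qed.

Lemma rep3U_rep3_marked (u : dword bool) : rep3_marked u -> rep3U (map snd u).
Proof. by rewrite /rep3U; case: u => [|[[] d] u] //= ->; rewrite ?orbT. Qed.

Lemma limage_relabel (w : dword bool) :
  limage relabel (fun u => rep3_marked u) w <-> all fst w && rep3U (map snd w).
Proof.
split=> [[u [marked ->]] | /andP[wtrue]].
  by rewrite all_fst_relabel map_snd_relabel rep3U_rep3_marked.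
case: w wtrue => [|[[] d] w] //= wtrue; rewrite /rep3U => /orP[rep3w | rep3w].
  exists ((false, d) :: w); split=> //.
  by rewrite -[RHS]/((true, d) :: hom_ext relabel w) relabel_id.
by exists ((true, d) :: w); rewrite relabel_id.
Qed.

Lemma DSAFA_not_closed_union : exists (Sigma : finType) (L1 L2 : dlang Sigma),
  DSAFA_lang L1 /\ DSAFA_lang L2 /\ ~ DSAFA_lang (lunion L1 L2).
Proof.
exists bool, (data_lang rep3), (data_lang (fun s => rep3 (behead s))).
split; [exact: rep3_DSAFA | split; [exact: rep3_behead_DSAFA |]].
apply: contra_not rep3U_not_DSAFA; apply: eq_DSAFA_lang => w.
exact: rwP orP.
Qed.

Lemma DSAFA_not_closed_inter : exists (Sigma : finType) (L1 L2 : dlang Sigma),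
  DSAFA_lang L1 /\ DSAFA_lang L2 /\ ~ DSAFA_lang (linter L1 L2).
Proof.
exists bool, (lcompl (data_lang rep3)), (lcompl (data_lang (fun s => rep3 (behead s)))).
split; first exact/DSAFA_lang_compl/rep3_DSAFA.
split; first exact/DSAFA_lang_compl/rep3_behead_DSAFA.
apply: contra_not rep3U_not_DSAFA => /DSAFA_lang_compl; apply: eq_DSAFA_lang => w.
rewrite /lcompl /linter /data_lang /rep3U; split=> [nrep | /orP[rep [] // | rep [] //]].
by apply/negPn/negP => /norP[/negP nrep1 /negP nrep2]; apply: nrep.
Qed.

Lemma DSAFA_not_closed_concat : exists (Sigma : finType) (L1 L2 : dlang Sigma),
  DSAFA_lang L1 /\ DSAFA_lang L2 /\ ~ DSAFA_lang (lconcat L1 L2).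
Proof.
exists bool, (data_lang (fun s => size s <= 1)), (data_lang rep3).
split; [exact: short_DSAFA | split; [exact: rep3_DSAFA |]].
by apply: contra_not rep3U_not_DSAFA; apply: eq_DSAFA_lang lconcat_short_rep3.
Qed.

Lemma DSAFA_not_closed_star : exists (Sigma : finType) (L : dlang Sigma),
  DSAFA_lang L /\ ~ DSAFA_lang (lstar L).
Proof.
exists bool, (fun w => flag_or_rep3 w); split; first exact: flag_or_rep3_DSAFA.
by apply: (@separates_not_DSAFA _ false); split; rewrite lstarP.
Qed.

Lemma DSAFA_not_closed_rev : exists (Sigma : finType) (L : dlang Sigma),
  DSAFA_lang L /\ ~ DSAFA_lang (lrev L).
Proof.
exists bool, (data_lang rep3U_rev); split; first exact: rep3U_rev_DSAFA.
apply: contra_not rep3U_not_DSAFA; apply: eq_DSAFA_lang => w.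
by rewrite /lrev /data_lang map_rev rep3U_revE.
Qed.

Lemma DSAFA_not_closed_hom : exists (Sigma : finType) (L : dlang Sigma)
  (h : Sigma * data -> dword Sigma), DSAFA_lang L /\ ~ DSAFA_lang (limage h L).
Proof.
exists bool, (fun w => rep3_marked w), relabel; split; first exact: rep3_marked_DSAFA.
apply: contra_not (@separates_not_DSAFA (fun w => all fst w && rep3U (map snd w)) true _) => //.
exact: eq_DSAFA_lang limage_relabel.
Qed.

Lemma DSAFA_not_closed_preimage : exists (Sigma : finType) (L : dlang Sigma)
  (h : Sigma * data -> dword Sigma), DSAFA_lang L /\ ~ DSAFA_lang (lpreimage h L).
Proof.
exists bool, (data_lang rep3U_doubled), double; split; first exact: rep3U_doubled_DSAFA.
apply: contra_not rep3U_not_DSAFA; apply: eq_DSAFA_lang => w.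
by rewrite /lpreimage /data_lang rep3U_doubledE.
Qed.

Theorem theorem12 :
  (forall (Sigma : finType) (L : dlang Sigma),
      DSAFA_lang L -> DSAFA_lang (lcompl L)) /\
  (exists (Sigma : finType) (L1 L2 : dlang Sigma),
      DSAFA_lang L1 /\ DSAFA_lang L2 /\ ~ DSAFA_lang (lunion L1 L2)) /\
  (exists (Sigma : finType) (L1 L2 : dlang Sigma),
      DSAFA_lang L1 /\ DSAFA_lang L2 /\ ~ DSAFA_lang (linter L1 L2)) /\
  (exists (Sigma : finType) (L1 L2 : dlang Sigma),
      DSAFA_lang L1 /\ DSAFA_lang L2 /\ ~ DSAFA_lang (lconcat L1 L2)) /\
  (exists (Sigma : finType) (L : dlang Sigma),
      DSAFA_lang L /\ ~ DSAFA_lang (lstar L)) /\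
  (exists (Sigma : finType) (L : dlang Sigma),
      DSAFA_lang L /\ ~ DSAFA_lang (lrev L)) /\
  (exists (Sigma : finType) (L : dlang Sigma) (h : Sigma * data -> dword Sigma),
      DSAFA_lang L /\ ~ DSAFA_lang (limage h L)) /\
  (exists (Sigma : finType) (L : dlang Sigma) (h : Sigma * data -> dword Sigma),
      DSAFA_lang L /\ ~ DSAFA_lang (lpreimage h L)).
Proof.
split; first exact: DSAFA_lang_compl.
split; first exact: DSAFA_not_closed_union.
split; first exact: DSAFA_not_closed_inter.
split; first exact: DSAFA_not_closed_concat.
split; first exact: DSAFA_not_closed_star.
split; first exact: DSAFA_not_closed_rev.
split; first exact: DSAFA_not_closed_hom.
exact: DSAFA_not_closed_preimage.
Qed.
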